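(* Let $X$ be a strictly systolic angled complex, let $v$ be a vertex of $X$ and let $\sigma$ be a simple cycle in $\mathrm{lk}(v)$. Then either the angular length $\sum_{c\in\sigma} w(c)$ of $\sigma$ is $\geq 2\pi$, or $\sigma$ is the boundary of a triangulated disk without interior vertices all of whose edges are edges of $\mathrm{lk}(v)$.
   Context: A quasi-simplicial complex is a simplicial complex in which multiple edges between two vertices are allowed, but loops are not allowed and no two distinct edges of a 2-simplex coincide (no 2-simplex has two or more edges in common with another in the sense that a 2-simplex's boundary edges are distinct); complexes are locally finite. It is 3-flag if whenever it contains three faces of a tetrahedron (3-simplex) it contains the whole tetrahedron. For a vertex $v$, $\mathrm{lk}(v)$ denotes the geometric link of $v$ in the 2-skeleton $X^{(2)}$: a graph whose vertices correspond to edges of $X$ at $v$ and whose edges correspond to corners (at $v$) of 2-simplices containing $v$. An angled complex is such an $X$ together with a weight function $w$ assigning a nonnegative real number to each corner of each 2-simplex (equivalently, to each edge of each vertex link), with finite image, satisfying the weak triangle inequality: for every vertex $v$ and vertices $v_1,v_2,v_3$ of $\mathrm{lk}(v)$ joined by edges $\alpha_{12},\alpha_{23},\alpha_{13}$ of $\mathrm{lk}(v)$ ($\alpha_{ij}$ from $v_i$ to $v_j$), $w(\alpha_{13})\le w(\alpha_{12})+w(\alpha_{23})$. The angular length of a path in a vertex link is the sum of the weights of its edges. A simple cycle of length greater than 3 in $\mathrm{lk}(v)$ is 2-full if no edge of $\mathrm{lk}(v)$ connects two vertices of the cycle having a common neighbour in the cycle. $X$ is locally $2\pi$-large if every 2-full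 cycle in every vertex link has angular length $\geq 2\pi$. A strictly systolic angled complex is a simply connected, locally $2\pi$-large, 3-flag angled quasi-simplicial complex in which the sum of the three weights of each 2-simplex is strictly less than $\pi$. *)

From mathcomp Require Import all_boot all_order all_algebra.
From mathcomp Require Import reals trigo.
From Stdlib Require Import Relations.

Set Implicit Arguments.
Unset Strict Implicit.
Unset Printing Implicit Defensive.

Import Order.TTheory GRing.Theory Num.Theory.
Local Open Scope ring_scope.

(* A (3-skeleton of a) quasi-simplicial complex, given combinatorially.       *)
(*  - tedges f i    : the edge of f opposite to its vertex tverts f i         *)
(*  - qfaces t i    : the face (2-simplex) of t opposite to qverts t i        *)
(* Multiple edges between two vertices (and multiple simplices on the same    *)
(* vertices) are allowed; each closed simplex is embedded.                    *)
Record complex3 := Complex3 {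
  vert : Type; edge : Type; tri : Type; tet : Type;
  ends : edge -> 'I_2 -> vert;
  tverts : tri -> 'I_3 -> vert;
  tedges : tri -> 'I_3 -> edge;
  qverts : tet -> 'I_4 -> vert;
  qfaces : tet -> 'I_4 -> tri }.

Section Defs.
Variable X : complex3.

Definition incident (e : edge X) (u : vert X) : Prop := exists a, ends e a = u.

Definition is_qscomplex : Prop :=
  [/\
      forall e : edge X, ends e ord0 <> ends e ord_max,
      forall f : tri X, injective (tverts f),
      forall (f : tri X) (i : 'I_3) (a : 'I_2),
        exists2 j, j != i & ends (tedges f i) a = tverts f j,
      forall (f : tri X) (i j : 'I_3), j != i -> incident (tedges f i) (tverts f j)
    & [/\
      forall t : tet X, injective (qverts t),
      forall (t : tet X) (i : 'I_4) (k : 'I_3),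
        exists2 j, j != i & tverts (qfaces t i) k = qverts t j
    &
      forall (t : tet X) (i i' : 'I_4), i != i' ->
        exists a b, tedges (qfaces t i) a = tedges (qfaces t i') b]].

Definition finitely_many (T : Type) (P : T -> Prop) : Prop :=
  exists n (g : nat -> T), forall x, P x -> exists2 k, (k < n)%N & g k = x.

Definition locally_finite : Prop :=
  forall u : vert X,
  [/\ finitely_many (fun e : edge X => incident e u),
      finitely_many (fun f : tri X => exists i, tverts f i = u)
    & finitely_many (fun t : tet X => exists i, qverts t i = u)].

Definition has_edge (f : tri X) (e : edge X) : Prop := exists i, tedges f i = e.

Definition three_flag : Prop :=
  forall (u : vert X) (e1 e2 e3 : edge X) (f1 f2 f3 : tri X),
    incident e1 u -> incident e2 u -> incident e3 u ->
    e1 <> e2 -> e2 <> e3 -> e1 <> e3 ->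
    has_edge f1 e1 -> has_edge f1 e2 ->
    has_edge f2 e2 -> has_edge f2 e3 ->
    has_edge f3 e3 -> has_edge f3 e1 ->
    exists t : tet X, exists i1 i2 i3,
      [/\ qfaces t i1 = f1, qfaces t i2 = f2 & qfaces t i3 = f3].

Definition odge := (edge X * bool)%type. (* oriented edge; true = reversed *)
Definition osrc (d : odge) : vert X := if d.2 then ends d.1 ord_max else ends d.1 ord0.
Definition otgt (d : odge) : vert X := if d.2 then ends d.1 ord0 else ends d.1 ord_max.
Definition oflip (d : odge) : odge := (d.1, ~~ d.2).

Fixpoint is_walk (v : vert X) (p : seq odge) : Prop :=
  match p with
  | [::] => True
  | d :: p' => osrc d = v /\ is_walk (otgt d) p'
  end.

Definition walk_end (v : vert X) (p : seq odge) : vert X := foldl (fun _ d => otgt d) v p.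

Definition null_loop (l : seq odge) : Prop :=
  (exists d, l = [:: d; oflip d]) \/
  (exists d1 d2 d3 (f : tri X) (i j k : 'I_3),
     [/\ l = [:: d1; d2; d3], [/\ i != j, j != k & i != k],
         [/\ d1.1 = tedges f i, d2.1 = tedges f j & d3.1 = tedges f k],
         is_walk (osrc d1) l & walk_end (osrc d1) l = osrc d1]).

(* elementary move on walks starting at v: delete a null loop based at the
   current point (its inverse, insertion, is provided by the symmetric closure) *)
Definition htpy_move (v : vert X) (p q : seq odge) : Prop :=
  exists a l b, [/\ p = a ++ l ++ b, q = a ++ b, null_loop l
                  & is_walk (walk_end v a) l].

Definition simply_connected : Prop :=
  (forall u u' : vert X, exists p, is_walk u p /\ walk_end u p = u') /\
  (forall (v : vert X) (p : seq odge), is_walk v p -> walk_end v p = v ->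
     clos_refl_sym_trans _ (htpy_move v) p [::]).

(* Vertices of lk(u): edges e with incident e u.  Edges of lk(u): corners      *)
(* c = (f, i) with tverts f i = u; such a corner joins the two edges of f      *)
(* incident to u, i.e. the edges tedges f j, j != i.                           *)
Definition corner := (tri X * 'I_3)%type.

Definition lk_joins (u : vert X) (c : corner) (e e' : edge X) : Prop :=
  tverts c.1 c.2 = u /\
  exists j k : 'I_3, [/\ j != c.2, k != c.2, j != k,
                         tedges c.1 j = e & tedges c.1 k = e'].

Variable R : realType.
Variable w : tri X -> 'I_3 -> R.

Definition wt (c : corner) : R := w c.1 c.2.

Definition angled : Prop :=
  [/\ forall f i, 0 <= w f i,
      exists n (g : nat -> R), forall f i, exists2 k, (k < n)%N & w f i = g k
    &
      forall (u : vert X) (e1 e2 e3 : edge X) (c12 c23 c13 : corner),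
        lk_joins u c12 e1 e2 -> lk_joins u c23 e2 e3 -> lk_joins u c13 e1 e3 ->
        wt c13 <= wt c12 + wt c23].

Definition lk_cycle (u : vert X) (n : nat) (x : nat -> edge X) (c : nat -> corner) : Prop :=
  [/\ (3 <= n)%N,
      forall k l, (k < n)%N -> (l < n)%N -> x k = x l -> k = l
    & forall k, (k < n)%N -> lk_joins u (c k) (x k) (x (k.+1 %% n)%N)].

Definition ang_length (n : nat) (c : nat -> corner) : R := \sum_(k < n) wt (c k).

Definition two_full (u : vert X) (n : nat) (x : nat -> edge X) (c : nat -> corner) : Prop :=
  [/\ lk_cycle u n x c, (3 < n)%N &
      forall k, (k < n)%N -> forall c' : corner, ~ lk_joins u c' (x k) (x (k.+2 %% n)%N)].

Definition locally_2pi_large : Prop :=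
  forall u n x c, two_full u n x c -> 2 * pi <= ang_length n c.

Definition strict_triangles : Prop :=
  forall f : tri X, w f ord0 + w f (inord 1) + w f ord_max < pi.

Definition strictly_systolic : Prop :=
  [/\ is_qscomplex, locally_finite, three_flag & simply_connected] /\
  [/\ angled, locally_2pi_large & strict_triangles].

End Defs.

(* Triangulations of a convex polygon with vertices i, i+1, ..., j (closed by the
   side {i,j}), using only diagonals satisfying D: the side {i,j} lies in a unique
   triangle {i,k,j}, and the two sub-polygons are triangulated recursively. *)
Inductive poly_tri (D : nat -> nat -> Prop) : nat -> nat -> Prop :=
| PT_side i : poly_tri D i i.+1
| PT_split i k j : (i < k)%N -> (k < j)%N ->
    (k = i.+1 \/ D i k) -> (j = k.+1 \/ D k j) ->
    poly_tri D i k -> poly_tri D k j -> poly_tri D i j.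

Definition bounds_lk_disk (X : complex3) (u : vert X) (n : nat) (x : nat -> edge X) : Prop :=
  poly_tri (fun i j => exists c, lk_joins u c (x i) (x j)) 0 n.-1.

From mathcomp Require Import all_boot all_order all_algebra.
From mathcomp Require Import reals trigo.
From mathcomp Require Import zify lra.
From Stdlib Require Import Classical.
Import Order.TTheory GRing.Theory Num.Theory.

(* Induction on the length of the cycle.  A 3-cycle bounds a single triangle,
   and a longer 2-full cycle has angular length at least 2 pi by local
   2 pi-largeness.  Otherwise a link edge d joins two vertices x_k, x_(k+2) at
   distance two along the cycle.  Replacing the path x_k x_(k+1) x_(k+2) by d
   gives a shorter simple cycle, no longer in angular length by the weak
   triangle inequality, and a disk bounded by the shorter cycle extends to one
   bounded by the original cycle by gluing on the triangle x_k x_(k+1) x_(k+2).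
   Only the weak triangle inequality and local 2 pi-largeness at v are used. *)

Lemma bumpS_mod n k i : (k < n)%N -> (i < n)%N ->
  bump k.+1 (i.+1 %% n) = (bump k i).+1 %% n.+1.
Proof.
move=> lt_kn lt_in; have [lt_i1n | le_ni1] := ltnP i.+1 n.
  by rewrite !modn_small /bump //; lia.
have -> : n = i.+1 by lia.
have -> : bump k i = i.+1 by rewrite /bump; lia.
by rewrite !modnn.
Qed.

Section PolygonTriangulations.
Variable D : nat -> nat -> Prop.

Lemma poly_tri_triangle i : poly_tri D i i.+2.
Proof. by apply: (@PT_split _ i i.+1); [| | left | left | exact: PT_side ..]. Qed.

Lemma poly_tri_map (D' : nat -> nat -> Prop) (g : nat -> nat) i j :
  {homo g : a b / (a < b)%N} ->
  (forall a b, D' a b -> D (g a) (g b)) ->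
  (forall a, (i <= a < j)%N ->
     g a.+1 = (g a).+1 \/ g a.+1 = (g a).+2 /\ D (g a) (g a).+2) ->
  poly_tri D' i j -> poly_tri D (g i) (g j).
Proof.
move=> g_mono DD' + P; elim: P => {i j} [i | i k j lt_ik lt_kj Dik Dkj _ IHl _ IHr] gap.
  have /gap[-> | [-> _]] : (i <= i < i.+1)%N by rewrite leqnn ltnSn.
    exact: PT_side.
  exact: poly_tri_triangle.
have side a : (i <= a < j)%N -> g a.+1 = (g a).+1 \/ D (g a) (g a.+1).
  by move=> /gap[-> | [-> Da]]; [left | right].
apply: (PT_split (g_mono _ _ lt_ik) (g_mono _ _ lt_kj)).
- by case: Dik => [-> | /DD']; [apply: side; lia | right].
- by case: Dkj => [-> | /DD']; [apply: side; lia | right].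
- by apply: IHl => a ?; apply: gap; lia.
- by apply: IHr => a ?; apply: gap; lia.
Qed.

(* [D (bump m a) (bump m b)] is [D] read on the polygon with vertex [m] deleted. *)
Lemma poly_tri_bump_inner m n : (0 < m <= n)%N -> D m.-1 m.+1 ->
  poly_tri (fun a b => D (bump m a) (bump m b)) 0 n -> poly_tri D 0 n.+1.
Proof.
move=> m_in Dm /(@poly_tri_map _ (bump m)) P.
have -> : n.+1 = bump m n by rewrite /bump; lia.
have -> : 0%N = bump m 0 by rewrite /bump; lia.
apply: P => [a b | // | a _]; first by rewrite /bump; lia.
have [-> | ne] := eqVneq a m.-1; last by left; rewrite /bump; lia.
have -> : bump m m.-1 = m.-1 by rewrite /bump; lia.
have -> : bump m m.-1.+1 = m.+1 by rewrite /bump; lia.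
by right; split; [lia | rewrite prednK //; lia].
Qed.

Lemma poly_tri_bump_last n : (0 < n)%N -> D 0 n ->
  poly_tri (fun a b => D (bump n.+1 a) (bump n.+1 b)) 0 n -> poly_tri D 0 n.+1.
Proof.
move=> n_gt0 Dn /(@poly_tri_map _ (bump n.+1)) P.
apply: (@PT_split _ 0 n n.+1) => //; [by right | by left | | exact: PT_side].
have : poly_tri D (bump n.+1 0) (bump n.+1 n).
  by apply: P => [a b | // | a ?]; [rewrite /bump; lia | left; rewrite /bump; lia].
by rewrite /bump ltnn.
Qed.

Lemma poly_tri_bump_first n : (0 < n)%N -> D 1 n.+1 ->
  poly_tri (fun a b => D (bump 0 a) (bump 0 b)) 0 n -> poly_tri D 0 n.+1.
Proof.
move=> n_gt0 Dn /(@poly_tri_map _ (bump 0)) P.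
apply: (@PT_split _ 0 1 n.+1) => //; [by left | by right | exact: PT_side |].
by apply: P => [a b | // | a _]; [rewrite /bump; lia | left].
Qed.

End PolygonTriangulations.

Section LinkCycles.
Variables (X : complex3) (v : vert X).

Lemma lk_joins_sym c e e' : lk_joins v c e e' -> lk_joins v c e' e.
Proof.
by case=> cv [j [k [nj nk njk ej ek]]]; split=> //; exists k, j; split; rewrite // eq_sym.
Qed.

Lemma lk_cycle_skip n x c k d : lk_cycle v n.+1 x c -> (3 <= n)%N -> (k < n)%N ->
  lk_joins v d (x k) (x (k.+2 %% n.+1)) ->
  lk_cycle v n (x \o bump k.+1) (fun i => if i == k then d else c (bump k i)).
Proof.
move=> [_ x_inj x_joins] n_ge3 lt_kn dk.
split=> // [a b lt_an lt_bn /x_inj | i lt_in /=].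
  by move=> eq_ab; apply: (can_inj (bumpK k.+1)); apply: eq_ab; rewrite /bump; lia.
rewrite bumpS_mod //; have [-> | ne] := eqVneq i k; first by rewrite /bump ltnn leqnn.
have -> : bump k.+1 i = bump k i by rewrite /bump; lia.
by apply: x_joins; rewrite /bump; lia.
Qed.

Lemma lk_cycle_skip0 n x c d : lk_cycle v n.+1 x c -> (3 <= n)%N ->
  lk_joins v d (x n) (x 1) ->
  lk_cycle v n (x \o bump 0) (fun i => if i == n.-1 then d else c (bump 0 i)).
Proof.
move=> [_ x_inj x_joins] n_ge3 dn.
split=> // [a b lt_an lt_bn /x_inj | i lt_in /=].
  by move=> eq_ab; apply: (can_inj (bumpK 0)); apply: eq_ab; rewrite /bump; lia.
rewrite /bump !leq0n !add1n.
have [-> | ne] := eqVneq i n.-1; first by rewrite prednK ?modnn //; lia.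
have -> : (i.+1 %% n = i.+1)%N by rewrite modn_small; lia.
have := x_joins i.+1; rewrite modn_small; last lia.
by apply; lia.
Qed.

Lemma bounds_lk_disk_skip n x k :
  (2 < n)%N -> (k < n)%N -> (exists d, lk_joins v d (x k) (x (k.+2 %% n.+1))) ->
  bounds_lk_disk v n (x \o bump k.+1) -> bounds_lk_disk v n.+1 x.
Proof.
case: n => [// | n] n_gt2 lt_kn [d dk]; rewrite /bounds_lk_disk /=.
have [lt_k1n | le_nk1] := ltnP k.+1 n.+1.
  apply: poly_tri_bump_inner; first lia.
  by exists d; rewrite -[k.+2](@modn_small _ n.+2) //; lia.
move: dk; have -> : k = n by lia.
rewrite modnn => dn.
by apply: poly_tri_bump_last; [lia | exists d; exact: lk_joins_sym].
Qed.

Lemma bounds_lk_disk_skip0 n x : (2 < n)%N -> (exists d, lk_joins v d (x n) (x 1)) ->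
  bounds_lk_disk v n (x \o bump 0) -> bounds_lk_disk v n.+1 x.
Proof.
case: n => [// | n] n_gt2 [d dn]; rewrite /bounds_lk_disk /=.
by apply: poly_tri_bump_first; [lia | exists d; exact: lk_joins_sym].
Qed.

End LinkCycles.

Local Open Scope ring_scope.

Section AngularLength.
Variables (R : realType) (X : complex3) (w : tri X -> 'I_3 -> R).

Lemma ang_length_bump n q c : (q <= n)%N ->
  ang_length w n.+1 c = wt w (c q) + ang_length w n (c \o bump q).
Proof. by move=> le_qn; rewrite /ang_length (bigD1_ord (@Ordinal n.+1 q le_qn)). Qed.

Lemma ang_length_set n p d c : (p < n)%N ->
  ang_length w n (fun i => if i == p then d else c i)
  = ang_length w n c - wt w (c p) + wt w d.
Proof.
move=> lt_pn; rewrite /ang_length.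
case: n lt_pn => [// | n] lt_pn.
rewrite !(bigD1_ord (@Ordinal n.+1 p lt_pn)) //= eqxx.
under eq_bigr => i _ do rewrite eq_sym (negbTE (neq_bump p i)).
lra.
Qed.

Lemma ang_length_shortcut n q p d c : (q <= n)%N -> (p < n)%N ->
  wt w d <= wt w (c q) + wt w (c (bump q p)) ->
  ang_length w n (fun i => if i == p then d else c (bump q i)) <= ang_length w n.+1 c.
Proof.
move=> le_qn lt_pn tri_d.
rewrite (ang_length_set _ _ _ (c \o bump q)) // (ang_length_bump _ _ c le_qn) /=; lra.
Qed.

End AngularLength.

Section CyclesInAngledLinks.
Variables (R : realType) (X : complex3) (w : tri X -> 'I_3 -> R) (v : vert X).
Hypothesis weak_triangle : forall e1 e2 e3 c12 c23 c13,
  lk_joins v c12 e1 e2 -> lk_joins v c23 e2 e3 -> lk_joins v c13 e1 e3 ->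
  wt w c13 <= wt w c12 + wt w c23.
Hypothesis two_full_large : forall n x c, two_full v n x c -> 2 * pi <= ang_length w n c.

Lemma not_two_full_chord {n x c} : lk_cycle v n x c -> (3 < n)%N ->
  ~ two_full v n x c -> exists k d, (k < n)%N /\ lk_joins v d (x k) (x (k.+2 %% n)%N).
Proof.
move=> cyc n_gt3 not_full; apply: NNPP => no_chord; apply: not_full.
by split=> // k lt_kn d dk; apply: no_chord; exists k, d.
Qed.

Lemma lk_cycle_shortcut {n x c} : lk_cycle v n.+1 x c -> (3 <= n)%N ->
  ~ two_full v n.+1 x c ->
  exists x' c', [/\ lk_cycle v n x' c', ang_length w n c' <= ang_length w n.+1 c
                  & bounds_lk_disk v n x' -> bounds_lk_disk v n.+1 x].
Proof.
move=> cyc n_ge3 /(not_two_full_chord cyc) [|k [d [lt_k dk]]]; first lia.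
have [_ _ x_joins] := cyc.
have x_joins_lt i : (i < n)%N -> lk_joins v (c i) (x i) (x i.+1).
  by move=> lt_in; have := x_joins i; rewrite modn_small; [apply; lia | lia].
have [lt_kn | le_nk] := ltnP k n.
  exists (x \o bump k.+1), (fun i => if i == k then d else c (bump k i)); split.
  - exact: lk_cycle_skip.
  - apply: ang_length_shortcut; [exact: ltnW | done | rewrite /bump leqnn add1n].
    exact: (weak_triangle _ _ _ _ _ _ (x_joins_lt k lt_kn) (x_joins k.+1 lt_kn) dk).
  - by apply: bounds_lk_disk_skip; [lia | | exists d].
(* The chord joins x_n and x_1 across vertex 0. *)
move: dk; have -> : k = n by lia.
rewrite -[n.+2]/(1 + n.+1)%N modnDr modn_small; last lia; move=> dn.
exists (x \o bump 0), (fun i => if i == n.-1 then d else c (bump 0 i)); split.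
- exact: lk_cycle_skip0.
- apply: ang_length_shortcut; [done | lia | rewrite /bump leq0n add1n prednK; last lia].
  have := x_joins n (ltnSn n); rewrite modnn => cn.
  have c0 : lk_joins v (c 0) (x 0) (x 1) by apply: x_joins_lt; lia.
  by rewrite addrC; exact: (weak_triangle _ _ _ _ _ _ cn c0 dn).
- by apply: bounds_lk_disk_skip0; [lia | exists d].
Qed.

Lemma lk_cycle_large_or_disk n x c :
  lk_cycle v n x c -> 2 * pi <= ang_length w n c \/ bounds_lk_disk v n x.
Proof.
elim: n x c => [|n IH] x c cyc; first by case: cyc.
have [-> | n_ne2] := eqVneq n 2; first by right; exact: poly_tri_triangle.
have n_ge3 : (3 <= n)%N by case: cyc => ? _ _; lia.
have [/two_full_large long | not_full] := classic (two_full v n.+1 x c); first by left.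
have [x' [c' [cyc' shorter disk_lift]]] := lk_cycle_shortcut cyc n_ge3 not_full.
have [long | disk] := IH x' c' cyc'; last by right; exact: disk_lift.
by left; exact: le_trans long shorter.
Qed.

End CyclesInAngledLinks.

Theorem lemma2p5 (R : realType) (X : complex3) (w : tri X -> 'I_3 -> R)
  (v : vert X) (n : nat) (x : nat -> edge X) (c : nat -> corner X) :
  strictly_systolic w -> lk_cycle v n x c ->
  2 * pi <= ang_length w n c \/ bounds_lk_disk v n x.
Proof.
move=> [_ [[_ _ weak_triangle] locally_large _]] cyc.
by apply: lk_cycle_large_or_disk; [exact: weak_triangle | exact: locally_large |].
Qed.
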